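(* Let $\mu$ be a probability measure on $\mathbb{R}$ with density $p$ that is locally absolutely continuous on $\mathbb{R}$, satisfies $p(x)=p(-x)$ for all $x$, $p'(x)\le0$ for almost every $x>0$, and $\lim_{x\to\infty}p(x)\log x=0$. Then $\operatorname{Re}G_\mu(x+yi)>0$ for all $x>0$, $y>0$.
   Context: $G_\mu(z)=\int_{\mathbb{R}}\frac{1}{z-u}\mu(du)$ for $z\in\mathbb{C}^+$ is the Cauchy transform of $\mu$. *)

From Stdlib Require Import Reals Lra.
Open Scope R_scope.

Definition abs_cont_on (f : R -> R) (a b : R) : Prop :=
  forall eps, 0 < eps -> exists delta, 0 < delta /\
    forall (n : nat) (c d : nat -> R),
      (forall i, (i <= n)%nat -> a <= c i /\ c i <= d i /\ d i <= b) ->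
      (forall i j, (i <= n)%nat -> (j <= n)%nat -> i <> j ->
          d i <= c j \/ d j <= c i) ->
      sum_f_R0 (fun i => d i - c i) n < delta ->
      sum_f_R0 (fun i => Rabs (f (d i) - f (c i))) n < eps.

Definition loc_abs_cont (f : R -> R) : Prop :=
  forall a b, a <= b -> abs_cont_on f a b.

Definition null_set (N : R -> Prop) : Prop :=
  forall eps, 0 < eps -> exists a b : nat -> R,
    (forall n, a n <= b n) /\
    (forall x, N x -> exists n, a n < x < b n) /\
    (forall n, sum_f_R0 (fun k => b k - a k) n <= eps).

Definition improper_int (f : R -> R) (l : R) : Prop :=
  (forall a b, a <= b -> exists pr : Riemann_integrable f a b, True) /\
  (forall eps, 0 < eps -> exists M, forall a b (pr : Riemann_integrable f a b),
      a < - M -> M < b -> Rabs (RiemannInt pr - l) < eps).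

(* real part of the Cauchy transform of the measure p(u)du at z = x + iy:
   Re 1/(z-u) = (x-u)/((x-u)^2 + y^2) *)
Definition re_cauchy_integrand (p : R -> R) (x y : R) (u : R) : R :=
  (x - u) / ((x - u) ^ 2 + y ^ 2) * p u.

Definition re_cauchy_transform_is (p : R -> R) (x y l : R) : Prop :=
  improper_int (re_cauchy_integrand p x y) l.

(* Re G_mu(x + iy) is the improper integral over R of k(u) p(u), where
   k(u) = (x - u)/((x - u)^2 + y^2).

   A locally absolutely
      continuous p whose derivative is <= 0 off a null set is nonincreasing
      on (0,+oo).  For eps > 0 we sweep [a,b] from the left by a supremum
      argument, keeping p(s) - p(a) <= eps (s - a) + the variation of p over
      a list of non-overlapping pieces, each inside one interval of a cover of
      the null set of small total length; absolute continuity makes that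
      variation small.
   2. Convergence ([integrand_cauchy]).  |k| <= 1/(2y) and p is integrable,
      so the integrals of k p satisfy the Cauchy criterion at infinity.
   3. Positivity ([RInt_sym_lower_bound]).  By evenness the integral over
      [-T,T] is the integral over [0,T] of h p, h(u) = k(u) + k(-u) = H'(u)
      with H(u) = (ln((x+u)^2+y^2) - ln((x-u)^2+y^2))/2 >= 0 and H(0) = 0.
      Abel's inequality for the nonincreasing weight p bounds it below by
      c (p(s) - p(t)), where c > 0 is a lower bound of H on [s,t]; we choose
      0 < s < t with p(s) > p(t), possible since p is a nonzero density and
      p(x) ln x -> 0. *)

From Stdlib Require Import Reals Lra Lia List Sorted Classical.
Import ListNotations.
Open Scope R_scope.

Definition lsum {A} (F : A -> R) (l : list A) : R :=
  fold_right (fun x acc => F x + acc) 0 l.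

Lemma sum_f_R0_nth {A} (F : A -> R) (l : list A) (d : A) : l <> [] ->
  sum_f_R0 (fun i => F (nth i l d)) (pred (length l)) = lsum F l.
Proof.
  induction l as [|x l IH]; [congruence|]; intros _.
  destruct l as [|y l]; [simpl; lra|].
  change (pred (length (x :: y :: l))) with (length (y :: l)).
  rewrite decomp_sum by (simpl; lia).
  change (lsum F (x :: y :: l)) with (F x + lsum F (y :: l)).
  rewrite <- IH by congruence. reflexivity.
Qed.

Lemma StronglySorted_nth {A} (rel : A -> A -> Prop) (l : list A) (d : A) :
  StronglySorted rel l ->
  forall i j, (i < j < length l)%nat -> rel (nth i l d) (nth j l d).
Proof.
  induction l as [|x l IH]; intros Hs i j Hij; simpl in Hij; [lia|].
  inversion Hs as [|? ? Hl Hx]; subst. rewrite Forall_forall in Hx.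
  destruct i, j; try lia; simpl.
  - apply Hx, nth_In. lia.
  - apply IH; auto. lia.
Qed.

Lemma StronglySorted_filter {A} (rel : A -> A -> Prop) (g : A -> bool) l :
  StronglySorted rel l -> StronglySorted rel (filter g l).
Proof.
  induction l as [|x l IH]; intros Hs; simpl; [constructor|].
  inversion Hs as [|? ? Hl Hx]; subst. destruct (g x); auto.
  constructor; auto. rewrite Forall_forall in *. intros z Hz.
  apply filter_In in Hz. apply Hx; tauto.
Qed.

Lemma lsum_filter {A} (F : A -> R) (g : A -> bool) l :
  lsum F l = lsum F (filter g l) + lsum F (filter (fun e => negb (g e)) l).
Proof.
  induction l as [|x l IH]; simpl; [lra|].
  destruct (g x); simpl; rewrite IH; lra.
Qed.

Section IntervalFamilies.
Variables (A : Type) (lo hi : A -> R).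

(* [e] lies to the right of [e']: in a list sorted by this relation the
   intervals do not overlap. *)
Definition right_of (e e' : A) : Prop := hi e' <= lo e.

Definition inside (a b : R) (e : A) : Prop := a <= lo e /\ lo e <= hi e /\ hi e <= b.

Definition total_length (L : list A) : R := lsum (fun e => hi e - lo e) L.

Definition variation (f : R -> R) (L : list A) : R :=
  lsum (fun e => Rabs (f (hi e) - f (lo e))) L.

Lemma abs_cont_family f a b : abs_cont_on f a b ->
  forall eta, 0 < eta -> exists delta, 0 < delta /\
    forall L, StronglySorted right_of L -> Forall (inside a b) L ->
      total_length L < delta -> variation f L < eta.
Proof.
  intros Hac eta Heta. destruct (Hac eta Heta) as [delta [Hdelta Hsmall]].
  exists delta; split; auto. intros L Hs Hin Hlen.
  destruct L as [|e0 L0] eqn:EL; [unfold variation; simpl; lra|].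
  rewrite <- EL in *. assert (Hne : L <> []) by (rewrite EL; congruence).
  assert (Hpos : (0 < length L)%nat) by (rewrite EL; simpl; lia).
  unfold variation, total_length in *.
  rewrite <- (sum_f_R0_nth _ L e0) in Hlen by auto.
  rewrite <- (sum_f_R0_nth _ L e0) by auto.
  apply (Hsmall _ (fun i => lo (nth i L e0)) (fun i => hi (nth i L e0))); auto.
  - intros i Hi. rewrite Forall_forall in Hin. apply Hin, nth_In. lia.
  - intros i j Hi Hj Hij. destruct (Nat.lt_ge_cases i j).
    + right. apply (StronglySorted_nth _ _ e0 Hs i j). lia.
    + left. apply (StronglySorted_nth _ _ e0 Hs j i). lia.
Qed.

Lemma total_length_inside a b : a <= b -> forall L,
  StronglySorted right_of L -> Forall (inside a b) L -> total_length L <= b - a.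
Proof.
  intros Hab L. revert b Hab.
  induction L as [|e L IH]; intros b Hab Hs Hin; unfold total_length; simpl; [lra|].
  inversion Hs as [|? ? HsL He]; subst. inversion Hin as [|? ? [Ha [Hlh Hb]] HinL]; subst.
  assert (total_length L <= lo e - a); [|unfold total_length in *; lra].
  apply IH; [lra | exact HsL |]. rewrite Forall_forall in *.
  intros z Hz. destruct (HinL z Hz) as (? & ? & ?). specialize (He z Hz).
  unfold right_of in He. unfold inside. lra.
Qed.

Lemma total_length_covered (al be : nat -> R) (tag : A -> nat) :
  (forall k, al k <= be k) -> forall K L, StronglySorted right_of L ->
  Forall (fun e => lo e <= hi e /\ al (tag e) < lo e /\ hi e < be (tag e) /\
                   (tag e <= K)%nat) L ->
  total_length L <= sum_f_R0 (fun k => be k - al k) K.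
Proof.
  intros Hab. induction K as [|K IH]; intros L Hs Hin; rewrite Forall_forall in Hin.
  - apply total_length_inside; auto. rewrite Forall_forall. intros e He.
    destruct (Hin e He) as (? & ? & ? & ?). replace (tag e) with 0%nat in * by lia.
    unfold inside. lra.
  - set (last := fun e => Nat.eqb (tag e) (S K)).
    unfold total_length. rewrite (lsum_filter _ last). simpl sum_f_R0.
    rewrite (Rplus_comm (sum_f_R0 _ K)).
    apply Rplus_le_compat.
    + apply total_length_inside; auto. apply StronglySorted_filter; auto.
      rewrite Forall_forall. intros e He. apply filter_In in He as [He Htag].
      apply Nat.eqb_eq in Htag. destruct (Hin e He) as (? & ? & ? & ?).
      rewrite Htag in *. unfold inside. lra.
    + apply IH. apply StronglySorted_filter; auto.
      rewrite Forall_forall. intros e He. apply filter_In in He as [He Htag].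
      apply Bool.negb_true_iff, Nat.eqb_neq in Htag.
      destruct (Hin e He) as (? & ? & ? & ?). repeat split; auto. lia.
Qed.

End IntervalFamilies.

Arguments right_of {A}.
Arguments inside {A}.
Arguments total_length {A}.
Arguments variation {A}.
Arguments abs_cont_family {A}.
Arguments total_length_covered {A}.

Lemma local_growth_bound p s l eps : derivable_pt_lim p s l -> l <= 0 -> 0 < eps ->
  exists r, 0 < r /\ forall z, Rabs (z - s) < r ->
    (z <= s -> p s - p z <= eps * (s - z)) /\ (s <= z -> p z - p s <= eps * (z - s)).
Proof.
  intros Hl Hl0 Heps. destruct (Hl eps Heps) as [r Hr]. exists r. split; [apply cond_pos|].
  intros z Hz. destruct (Req_dec z s) as [->|Hne]; [split; intros; lra|].
  specialize (Hr (z - s)). replace (s + (z - s)) with z in Hr by ring.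
  specialize (Hr ltac:(intro; apply Hne; lra) Hz).
  set (q := (p z - p s) / (z - s)) in Hr.
  assert (Hq : p z - p s = q * (z - s)) by (unfold q; field; lra).
  apply Rabs_def2 in Hr. split; intro; nra.
Qed.

(* A piece of the sweep below: an interval together with the index of the
   interval of the null-set cover that contains it. *)
Record piece := Piece { left_end : R; right_end : R; cover_index : nat }.

Section Sweep.
Variables (p : R -> R) (N : R -> Prop) (a eps : R) (al be : nat -> R).
Hypothesis a_pos : 0 < a.
Hypothesis eps_pos : 0 < eps.
Hypothesis cover : forall x, N x -> exists n, al n < x < be n.
Hypothesis deriv_nonpos : forall x, 0 < x -> ~ N x ->
  exists l, derivable_pt_lim p x l /\ l <= 0.

Definition reached (s : R) (L : list piece) : Prop :=
  StronglySorted (right_of left_end right_end) L /\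
  Forall (fun e => inside left_end right_end a s e /\
                   al (cover_index e) < left_end e /\ right_end e < be (cover_index e)) L /\
  p s - p a <= eps * (s - a) + variation left_end right_end p L.

Lemma reached_start : reached a [].
Proof.
  split; [constructor|split; [constructor|]]. unfold variation. simpl. lra.
Qed.

Lemma reached_slow s w L : reached s L -> s <= w ->
  p w - p s <= eps * (w - s) -> reached w L.
Proof.
  intros [Hs [Hin Hp]] Hsw Hw. split; [|split]; auto; [|lra].
  eapply Forall_impl; [|exact Hin]. unfold inside. intros e He. lra.
Qed.

Lemma reached_cover s w L n : reached s L -> a <= s <= w ->
  al n < s -> w < be n -> reached w (Piece s w n :: L).
Proof.
  intros [Hs [Hin Hp]] Hsw Hal Hbe.
  assert (Hright : Forall (right_of left_end right_end (Piece s w n)) L).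
  { eapply Forall_impl; [|exact Hin]. unfold inside, right_of. simpl. intros e He. lra. }
  split; [|split].
  - constructor; auto.
  - constructor; [unfold inside; simpl; lra|].
    eapply Forall_impl; [|exact Hin]. unfold inside. intros e He. lra.
  - unfold variation in *. simpl. pose proof (Rle_abs (p w - p s)).
    assert (eps * (s - a) <= eps * (w - a)) by nra. lra.
Qed.

(* Near any point sig >= a the sweep can be continued across sig: either sig
   lies in a cover interval (new piece) or p has a derivative <= 0 at sig. *)
Lemma reached_across sig : a <= sig -> exists r, 0 < r /\
  forall s w L, sig - r < s <= sig -> sig <= w < sig + r -> a <= s ->
    reached s L -> exists L', reached w L'.
Proof.
  intros Hsig. destruct (classic (N sig)) as [HN|HN].
  - destruct (cover sig HN) as [n Hn]. exists (Rmin (sig - al n) (be n - sig)).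
    pose proof (Rmin_l (sig - al n) (be n - sig)).
    pose proof (Rmin_r (sig - al n) (be n - sig)).
    split; [apply Rmin_glb_lt; lra|].
    intros s w L Hs Hw Has HL. exists (Piece s w n :: L). apply reached_cover; auto; lra.
  - destruct (deriv_nonpos sig ltac:(lra) HN) as [l [Hl Hl0]].
    destruct (local_growth_bound p sig l eps Hl Hl0 eps_pos) as [r [Hr Hgrowth]].
    exists r. split; auto. intros s w L Hs Hw Has HL. exists L.
    apply reached_slow with s; auto; [lra|].
    destruct (Hgrowth s) as [Hleft _]; [apply Rabs_def1; lra|].
    destruct (Hgrowth w) as [_ Hright]; [apply Rabs_def1; lra|].
    specialize (Hleft ltac:(lra)). specialize (Hright ltac:(lra)). lra.
Qed.

(* The sweep reaches b: the supremum of the reachable points is b and is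
   reachable itself. *)
Lemma reached_end b : a <= b -> exists L, reached b L.
Proof.
  intros Hab. set (S := fun s => a <= s <= b /\ exists L, reached s L).
  destruct (completeness S) as [sig [Hub Hlub]].
  - exists b. intros s [Hs _]. lra.
  - exists a. split; [lra|]. exists []. apply reached_start.
  - assert (a <= sig) by (apply Hub; split; [lra|]; exists []; apply reached_start).
    assert (sig <= b) by (apply Hlub; intros s [Hs _]; lra).
    destruct (reached_across sig) as [r [Hr Hstep]]; auto.
    assert (Hnear : exists s, S s /\ sig - r < s).
    { apply NNPP; intro Hno. assert (sig <= sig - r); [|lra]. apply Hlub.
      intros s Hs. destruct (Rle_or_lt s (sig - r)); auto. exfalso; eauto. }
    destruct Hnear as [s [[Hs [L HL]] Hsr]].
    assert (s <= sig) by (apply Hub; split; eauto).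
    assert (Hsig : sig = b).
    { destruct (Req_dec sig b) as [|Hne]; auto. exfalso.
      pose proof (Rmin_l b (sig + r / 2)). pose proof (Rmin_r b (sig + r / 2)).
      set (w := Rmin b (sig + r / 2)) in *.
      assert (sig < w) by (apply Rmin_glb_lt; lra).
      destruct (Hstep s w L) as [L' HL']; try lra; auto.
      assert (w <= sig); [apply Hub; split; [lra | eauto] | lra]. }
    subst sig. apply (Hstep s b L); auto; lra.
Qed.

End Sweep.

Lemma tags_bounded (L : list piece) : exists K, Forall (fun e => (cover_index e <= K)%nat) L.
Proof.
  induction L as [|e L [K HK]]; [exists 0%nat; constructor|].
  exists (Nat.max K (cover_index e)). constructor; [cbv beta; lia|].
  eapply Forall_impl; [|exact HK]. intros x Hx. cbv beta in *. lia.
Qed.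

(* Increments of p on [a,b] with a > 0 are at most eps (b - a) + eta for
   all eps, eta > 0: run the sweep with a cover of the null set so small
   that absolute continuity makes the variation over the pieces < eta. *)
Lemma increment_small p (N : R -> Prop) : loc_abs_cont p -> null_set N ->
  (forall x, 0 < x -> ~ N x -> exists l, derivable_pt_lim p x l /\ l <= 0) ->
  forall a b, 0 < a -> a <= b -> forall eps eta, 0 < eps -> 0 < eta ->
    p b - p a <= eps * (b - a) + eta.
Proof.
  intros Hac HN Hd a b Ha Hab eps eta Heps Heta.
  destruct (abs_cont_family left_end right_end p a b (Hac a b Hab) eta Heta)
    as [delta [Hdelta Hvar]].
  destruct (HN (delta / 2)) as [al [be [Hal [Hcov Hsum]]]]; [lra|].
  destruct (reached_end p N a eps al be Ha Heps Hcov Hd b Hab) as [L [Hs [Hin Hp]]].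
  destruct (tags_bounded L) as [K HK].
  assert (Hlen : total_length left_end right_end L <= delta / 2).
  { eapply Rle_trans; [apply (total_length_covered _ _ al be cover_index Hal K L Hs)|auto].
    rewrite Forall_forall in *. intros e He.
    destruct (Hin e He) as [(? & ? & ?) ?]. specialize (HK e He). simpl in HK. tauto. }
  assert (variation left_end right_end p L < eta).
  { apply Hvar; auto; [|lra]. eapply Forall_impl; [|exact Hin]. intros e [He _]. exact He. }
  lra.
Qed.

Lemma nonincreasing_pos p (N : R -> Prop) : loc_abs_cont p -> null_set N ->
  (forall x, 0 < x -> ~ N x -> exists l, derivable_pt_lim p x l /\ l <= 0) ->
  forall a b, 0 < a -> a <= b -> p b <= p a.
Proof.
  intros Hac HN Hd a b Ha Hab. apply Rnot_lt_le. intro Hlt. set (D := p b - p a).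
  assert (Heps : 0 < D / (2 * (b - a + 1))) by (apply Rdiv_lt_0_compat; unfold D; lra).
  assert (D / (2 * (b - a + 1)) * (b - a) <= D / 2).
  { apply (Rmult_le_reg_r (2 * (b - a + 1))); [lra|]. field_simplify; unfold D; lra. }
  pose proof (increment_small p N Hac HN Hd a b Ha Hab _ (D / 4) Heps ltac:(unfold D; lra)).
  unfold D in *. lra.
Qed.

From Coquelicot Require Import Coquelicot.

(* Continuity everywhere, the regularity under which Coquelicot's integral
   RInt is well behaved; the wrappers below specialize its rules to it. *)
Definition cont (f : R -> R) : Prop := forall u, continuity_pt f u.

Lemma cont_continuous f u : cont f -> continuous f u.
Proof. intros H. apply continuity_pt_filterlim, H. Qed.

Lemma cont_ex_RInt f a b : cont f -> ex_RInt f a b.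
Proof.
  intros H. apply (ex_RInt_continuous (V := R_CompleteNormedModule)).
  intros; apply cont_continuous; auto.
Qed.

Lemma cont_mult f g : cont f -> cont g -> cont (fun x => f x * g x).
Proof. intros Hf Hg u. apply continuity_pt_mult; auto. Qed.

Lemma cont_plus f g : cont f -> cont g -> cont (fun x => f x + g x).
Proof. intros Hf Hg u. apply continuity_pt_plus; auto. Qed.

Lemma cont_minus f g : cont f -> cont g -> cont (fun x => f x - g x).
Proof. intros Hf Hg u. apply continuity_pt_minus; auto. Qed.

Lemma cont_const c : cont (fun _ => c).
Proof. intros u. apply continuity_pt_const. intros a b; auto. Qed.

Lemma cont_abs f : cont f -> cont (fun x => Rabs (f x)).
Proof. intros Hf u. apply (continuity_pt_comp f Rabs); auto. apply Rcontinuity_abs. Qed.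

Lemma cont_opp_arg f : cont f -> cont (fun u => f (- u)).
Proof.
  intros H u. apply (continuity_pt_comp (fun u => - u) f); [|apply H].
  apply (continuity_pt_opp (fun x => x)). apply continuity_pt_id.
Qed.

Lemma cont_of_derivable f : (forall u, ex_derive f u) -> cont f.
Proof.
  intros H u. apply continuity_pt_filterlim.
  apply (ex_derive_continuous (K := R_AbsRing) (V := R_NormedModule)), H.
Qed.

Lemma RInt_add f g a b : cont f -> cont g ->
  RInt (fun x => f x + g x) a b = RInt f a b + RInt g a b.
Proof. intros. apply (RInt_plus f g); apply cont_ex_RInt; auto. Qed.

Lemma RInt_sub f g a b : cont f -> cont g ->
  RInt (fun x => f x - g x) a b = RInt f a b - RInt g a b.
Proof. intros. apply (RInt_minus f g); apply cont_ex_RInt; auto. Qed.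

Lemma RInt_cmul c f a b : cont f -> RInt (fun x => c * f x) a b = c * RInt f a b.
Proof. intros. apply (RInt_scal f a b c); apply cont_ex_RInt; auto. Qed.

Lemma RInt_chasles f a b c : cont f -> RInt f a b + RInt f b c = RInt f a c.
Proof. intros. apply (RInt_Chasles f a b c); apply cont_ex_RInt; auto. Qed.

Lemma RInt_swap f a b : cont f -> RInt f b a = - RInt f a b.
Proof. intros. rewrite <- (opp_RInt_swap f a b); [reflexivity|apply cont_ex_RInt; auto]. Qed.

Lemma RInt_primitive G g a b : (forall u, is_derive G u (g u)) -> cont g ->
  RInt g a b = G b - G a.
Proof.
  intros HG Hg. apply is_RInt_unique, (is_RInt_derive G g); auto.
  intros; apply cont_continuous; auto.
Qed.

Lemma loc_abs_cont_cont p : loc_abs_cont p -> cont p.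
Proof.
  intros H u eps Heps. destruct (H (u - 1) (u + 1) ltac:(lra) eps Heps) as [d [Hd Hc]].
  exists (Rmin 1 d). split; [apply Rmin_pos; lra|]. intros z [_ Hz]. simpl in *.
  unfold Rdist in *. pose proof (Rmin_l 1 d). pose proof (Rmin_r 1 d).
  apply Rabs_def2 in Hz. destruct (Rle_dec u z).
  - specialize (Hc 0%nat (fun _ => u) (fun _ => z)). simpl in Hc.
    apply Hc; intros; lra || lia.
  - specialize (Hc 0%nat (fun _ => z) (fun _ => u)). simpl in Hc.
    rewrite Rabs_minus_sym. apply Hc; intros; lra || lia.
Qed.

Lemma continuity_pt_eps f x : continuity_pt f x -> forall eps, 0 < eps ->
  exists alp, 0 < alp /\ forall z, Rabs (z - x) < alp -> Rabs (f z - f x) < eps.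
Proof.
  intros H eps Heps. destruct (H eps Heps) as [alp [Ha Hz]]. exists alp. split; auto.
  intros z Hzx. destruct (Req_dec z x) as [->|Hne].
  - rewrite Rminus_eq_0, Rabs_R0. auto.
  - apply (Hz z). split; [split; [exact I|auto]|]. exact Hzx.
Qed.

(* By continuity at 0, monotonicity on (0,+oo) extends to [0,+oo). *)
Lemma nonincreasing_nonneg p (N : R -> Prop) : loc_abs_cont p -> null_set N ->
  (forall x, 0 < x -> ~ N x -> exists l, derivable_pt_lim p x l /\ l <= 0) ->
  forall a b, 0 <= a -> a <= b -> p b <= p a.
Proof.
  intros Hac HN Hd a b Ha Hab.
  destruct (Req_dec a 0) as [->|Hne]; [|apply (nonincreasing_pos p N); auto; lra].
  destruct (Req_dec b 0) as [->|Hb]; [lra|].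
  apply Rnot_lt_le. intro Hlt.
  destruct (continuity_pt_eps p 0 (loc_abs_cont_cont p Hac 0) (p b - p 0))
    as [alp [Halp Hc]]; [lra|].
  pose proof (Rmin_l (alp / 2) b). pose proof (Rmin_r (alp / 2) b).
  set (z := Rmin (alp / 2) b) in *.
  assert (0 < z) by (apply Rmin_glb_lt; lra).
  assert (p b <= p z) by (apply (nonincreasing_pos p N); auto).
  specialize (Hc z ltac:(rewrite Rminus_0_r, Rabs_pos_eq; lra)).
  apply Rabs_def2 in Hc. lra.
Qed.

Lemma nondecreasing_of_small_decrements (phi : R -> R) a b : a <= b ->
  (forall e, 0 < e -> exists d, 0 < d /\ forall w v, a <= w <= v -> v <= b ->
     v - w <= d -> - (e * (v - w)) <= phi v - phi w) ->
  phi a <= phi b.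
Proof.
  intros Hab Hloc. apply Rnot_lt_le. intro Hlt.
  set (e := (phi a - phi b) / (2 * (b - a + 1))).
  assert (He : 0 < e) by (apply Rdiv_lt_0_compat; lra).
  destruct (Hloc e He) as [d [Hd Hstep]].
  (* chaining n steps of length at most d *)
  assert (Hchain : forall (n : nat) v, a <= v <= b -> v - a <= INR n * d ->
    - (e * (v - a)) <= phi v - phi a).
  { induction n as [|n IH]; intros v Hv Hvn.
    - simpl in Hvn. replace v with a by lra. lra.
    - rewrite S_INR in Hvn. pose proof (pos_INR n).
      pose proof (Rmax_l a (v - d)). pose proof (Rmax_r a (v - d)).
      set (w := Rmax a (v - d)) in *.
      assert (w <= v) by (apply Rmax_lub; lra).
      assert (w - a <= INR n * d) by (unfold w, Rmax; destruct Rle_dec; nra).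
      specialize (IH w ltac:(lra) ltac:(lra)).
      specialize (Hstep w v ltac:(lra) ltac:(lra) ltac:(lra)).
      replace (e * (v - a)) with (e * (v - w) + e * (w - a)) by ring. lra. }
  destruct (INR_archimed d (b - a)) as [n Hn]; [lra|].
  specialize (Hchain n b ltac:(lra) ltac:(lra)).
  assert (e * (b - a) <= (phi a - phi b) / 2).
  { unfold e. apply (Rmult_le_reg_r (2 * (b - a + 1))); [lra|]. field_simplify; lra. }
  lra.
Qed.

Lemma RInt_weight_oscillation (G g p : R -> R) w v K eta : w <= v ->
  (forall u, is_derive G u (g u)) -> cont g -> cont p ->
  (forall u, w <= u <= v -> Rabs (g u) <= K) ->
  (forall u, w <= u <= v -> Rabs (p u - p v) <= eta) ->
  p v * (G v - G w) - K * eta * (v - w) <= RInt (fun u => g u * p u) w v.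
Proof.
  intros Hwv HG Hg Hp HK Hosc.
  assert (Hgp : cont (fun u => g u * p u)) by (apply cont_mult; auto).
  assert (Hpg : cont (fun u => p v * g u)) by (apply cont_mult; auto; apply cont_const).
  assert (E : RInt (fun u => g u * p u - p v * g u) w v
              = RInt (fun u => g u * p u) w v - p v * (G v - G w)).
  { rewrite RInt_sub, RInt_cmul, (RInt_primitive G g); auto. }
  assert (B : Rabs (RInt (fun u => g u * p u - p v * g u) w v) <= (v - w) * (K * eta)).
  { apply abs_RInt_le_const; auto; [apply cont_ex_RInt, cont_minus; auto|].
    intros t Ht. replace (g t * p t - p v * g t) with (g t * (p t - p v)) by ring.
    rewrite Rabs_mult. apply Rmult_le_compat; auto using Rabs_pos. }
  rewrite E in B. apply Rabs_le_between in B. nra.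
Qed.

(* Abel's inequality for a nonincreasing weight: if G' = g, G >= 0 on [a,b]
   and p is continuous and nonincreasing there, then
   p(b) G(b) - p(a) G(a) <= int_a^b g p.  Indeed the difference
   v |-> int_a^v g p - p(v) G(v) has, on short intervals [w,v], decrements
   bounded by G(w) (p(v) - p(w)) <= 0 plus an arbitrarily small error. *)
Lemma abel_inequality (G g p : R -> R) a b : a <= b ->
  (forall u, is_derive G u (g u)) -> cont g -> cont p ->
  (forall u v, a <= u <= v -> v <= b -> p v <= p u) ->
  (forall u, a <= u <= b -> 0 <= G u) ->
  p b * G b - p a * G a <= RInt (fun u => g u * p u) a b.
Proof.
  intros Hab HG Hg Hp Hmon HG0.
  assert (Hgp : cont (fun u => g u * p u)) by (apply cont_mult; auto).
  set (phi := fun v => RInt (fun u => g u * p u) a v - p v * G v).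
  assert (Hphi : phi a <= phi b).
  { apply nondecreasing_of_small_decrements; auto. intros e He.
    destruct (continuity_ab_maj (fun u => Rabs (g u)) a b Hab) as [Mx [HMx _]].
    { intros c _. apply cont_abs; auto. }
    set (K := Rabs (g Mx) + 1).
    assert (HKpos : 0 < K) by (unfold K; pose proof (Rabs_pos (g Mx)); lra).
    assert (HK : forall u, a <= u <= b -> Rabs (g u) <= K).
    { intros u Hu. specialize (HMx u Hu). unfold K. lra. }
    assert (HeK : 0 < e / K) by (apply Rdiv_lt_0_compat; lra).
    destruct (Heine_cor2 (f := p) (a := a) (b := b) (fun x _ => Hp x) (mkposreal _ HeK))
      as [d Hd]. simpl in Hd.
    exists (d / 2). split; [pose proof (cond_pos d); lra|]. intros w v Hw Hv Hvw.
    assert (Hosc := RInt_weight_oscillation G g p w v K (e / K) ltac:(lra) HG Hg Hp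
      ltac:(intros u Hu; apply HK; lra)
      ltac:(intros u Hu; apply Rlt_le, Hd; try lra; apply Rabs_def1; pose proof (cond_pos d); lra)).
    replace (K * (e / K)) with e in Hosc by (field; lra).
    assert (0 <= G w * (p w - p v)).
    { apply Rmult_le_pos; [apply HG0; lra|]. assert (p v <= p w) by (apply Hmon; lra). lra. }
    unfold phi. rewrite <- (RInt_chasles _ a w v Hgp). nra. }
  unfold phi in Hphi. rewrite RInt_point in Hphi. unfold zero in Hphi; simpl in Hphi. lra.
Qed.

(* The real part of 1/(z - u) for z = x + iy; the integrand of the theorem is
   re_kernel x y u * p u. *)
Definition re_kernel (x y u : R) : R := (x - u) / ((x - u) ^ 2 + y ^ 2).

Lemma sum_sq_pos a y : 0 < y -> 0 < a ^ 2 + y ^ 2.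
Proof. intros Hy. pose proof (pow2_ge_0 a). pose proof (pow_lt y 2 Hy). lra. Qed.

Lemma re_kernel_cont x y : 0 < y -> cont (re_kernel x y).
Proof.
  intros Hy. apply cont_of_derivable. intros u. unfold re_kernel. auto_derive.
  pose proof (sum_sq_pos (x - u) y Hy). simpl in *. lra.
Qed.

(* |Re 1/(z - u)| <= 1/|z - u| <= 1/(2y), by AM-GM on |x - u| and y. *)
Lemma re_kernel_bound x y u : 0 < y -> Rabs (re_kernel x y u) <= / (2 * y).
Proof.
  intros Hy. unfold re_kernel. set (t := Rabs (x - u)).
  assert (Ht : 0 <= t) by apply Rabs_pos.
  assert (Hq : (x - u) ^ 2 + y ^ 2 = t ^ 2 + y ^ 2) by (unfold t; rewrite pow2_abs; auto).
  pose proof (sum_sq_pos t y Hy).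
  rewrite Hq, Rabs_div by lra. rewrite (Rabs_pos_eq (t ^ 2 + y ^ 2)) by lra. fold t.
  assert (E : / (2 * y) - t / (t ^ 2 + y ^ 2) = (t - y) ^ 2 / (2 * y * (t ^ 2 + y ^ 2)))
    by (field; lra).
  assert (0 <= (t - y) ^ 2 / (2 * y * (t ^ 2 + y ^ 2))).
  { apply Rmult_le_pos; [apply pow2_ge_0|]. left. apply Rinv_0_lt_compat. nra. }
  lra.
Qed.

Lemma integrand_cont p x y : 0 < y -> cont p -> cont (re_cauchy_integrand p x y).
Proof. intros Hy Hp. apply cont_mult; auto. apply re_kernel_cont; auto. Qed.

Lemma RInt_integrand_bound p x y : 0 < y -> cont p -> (forall u, 0 <= p u) ->
  forall u v, Rabs (RInt (re_cauchy_integrand p x y) u v) <= / (2 * y) * Rabs (RInt p u v).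
Proof.
  intros Hy Hp Hnn. assert (Hf := integrand_cont p x y Hy Hp).
  assert (Hle : forall u v, u <= v ->
    Rabs (RInt (re_cauchy_integrand p x y) u v) <= / (2 * y) * Rabs (RInt p u v)).
  { intros u v Huv. eapply Rle_trans; [apply abs_RInt_le; auto; apply cont_ex_RInt; auto|].
    rewrite (Rabs_pos_eq (RInt p u v)) by (apply RInt_ge_0; auto; apply cont_ex_RInt; auto).
    rewrite <- RInt_cmul by auto.
    apply RInt_le; auto; apply cont_ex_RInt || intros z _.
    - apply cont_abs; auto.
    - apply cont_mult; auto. apply cont_const.
    - change (Rabs (re_kernel x y z * p z) <= / (2 * y) * p z).
      rewrite Rabs_mult, (Rabs_pos_eq (p z)) by auto.
      apply Rmult_le_compat_r; auto. apply re_kernel_bound; auto. }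
  intros u v. destruct (Rle_dec u v); auto.
  rewrite (RInt_swap _ v u), (RInt_swap p v u), !Rabs_Ropp by auto. apply Hle. lra.
Qed.

Lemma improper_int_RInt f l : cont f -> improper_int f l -> forall eps, 0 < eps ->
  exists M, 0 < M /\ forall a b, a < - M -> M < b -> Rabs (RInt f a b - l) < eps.
Proof.
  intros Hf [_ H] eps Heps. destruct (H eps Heps) as [M HM]. exists (Rabs M + 1).
  pose proof (Rle_abs M). pose proof (Rle_abs (- M)). rewrite Rabs_Ropp in *.
  split; [lra|]. intros a b Ha Hb.
  assert (pr := @continuity_implies_RiemannInt f a b ltac:(lra) (fun x _ => Hf x)).
  rewrite (RInt_Reals f a b pr). apply HM; lra.
Qed.

Lemma improper_int_of_cauchy f : cont f ->
  (forall eps, 0 < eps -> exists M, 0 < M /\ forall a a' b b',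
     a < - M -> a' < - M -> M < b -> M < b' -> Rabs (RInt f a b - RInt f a' b') < eps) ->
  exists l, improper_int f l.
Proof.
  intros Hf Hcauchy. set (I := fun n : nat => RInt f (- INR n) (INR n)).
  assert (HI : Cauchy_crit I).
  { intros eps Heps. destruct (Hcauchy eps Heps) as [M [HM HT]].
    destruct (INR_unbounded M) as [N HN]. exists N. intros n m Hn Hm.
    apply le_INR in Hn. apply le_INR in Hm. apply HT; lra. }
  destruct (Rcomplete.R_complete I HI) as [l Hl]. exists l. split.
  - intros a b Hab. exists (@continuity_implies_RiemannInt f a b Hab (fun z _ => Hf z)). auto.
  - intros eps Heps.
    destruct (Hcauchy (eps / 2) ltac:(lra)) as [M [HM HT]].
    destruct (Hl (eps / 2) ltac:(lra)) as [N1 HN1].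
    destruct (INR_unbounded M) as [N2 HN2].
    exists M. intros a b pr Ha Hb. rewrite <- (RInt_Reals _ a b pr).
    set (n := Nat.max N1 N2).
    assert (INR N2 <= INR n) by (apply le_INR; lia).
    specialize (HN1 n ltac:(lia)). unfold Rdist, I in HN1.
    specialize (HT a (- INR n) b (INR n) Ha ltac:(lra) Hb ltac:(lra)).
    apply Rabs_def2 in HN1. apply Rabs_def2 in HT. apply Rabs_def1; lra.
Qed.

Lemma improper_int_lower_bound f l m t : cont f -> improper_int f l ->
  (forall T, t <= T -> m <= RInt f (- T) T) -> m <= l.
Proof.
  intros Hf Hl Hm. apply Rnot_lt_le. intro Hlt.
  destruct (improper_int_RInt f l Hf Hl (m - l) ltac:(lra)) as [M [HM Hclose]].
  set (T := Rmax M t + 1). pose proof (Rmax_l M t). pose proof (Rmax_r M t).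
  specialize (Hclose (- T) T ltac:(unfold T; lra) ltac:(unfold T; lra)).
  specialize (Hm T ltac:(unfold T; lra)). apply Rabs_def2 in Hclose. lra.
Qed.

(* The integrals of k p over large intervals form a Cauchy family: the two
   integrals differ by integrals over the tails, controlled by those of p. *)
Lemma integrand_cauchy p x y : 0 < y -> cont p -> (forall u, 0 <= p u) -> improper_int p 1 ->
  forall eps, 0 < eps -> exists M, 0 < M /\ forall a a' b b',
    a < - M -> a' < - M -> M < b -> M < b' ->
    Rabs (RInt (re_cauchy_integrand p x y) a b - RInt (re_cauchy_integrand p x y) a' b') < eps.
Proof.
  intros Hy Hp Hnn Hprob eps Heps.
  set (C := / (2 * y)). assert (HC : 0 < C) by (apply Rinv_0_lt_compat; lra).
  set (eta := eps / (4 * C)). assert (Heta : 0 < eta) by (apply Rdiv_lt_0_compat; lra).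
  destruct (improper_int_RInt p 1 Hp Hprob eta Heta) as [M [HM Hclose]].
  exists M. split; auto. intros a a' b b' Ha Ha' Hb Hb'.
  set (f := re_cauchy_integrand p x y). assert (Hf : cont f) by (apply integrand_cont; auto).
  rewrite <- (RInt_chasles f a a' b Hf), <- (RInt_chasles f a' b' b Hf).
  replace (RInt f a a' + (RInt f a' b' + RInt f b' b) - RInt f a' b')
    with (RInt f a a' + RInt f b' b) by ring.
  assert (B1 := RInt_integrand_bound p x y Hy Hp Hnn a a').
  assert (B2 := RInt_integrand_bound p x y Hy Hp Hnn b' b). fold f C in B1, B2.
  assert (Hpa : Rabs (RInt p a a') < 2 * eta).
  { pose proof (RInt_chasles p a a' b Hp).
    specialize (Hclose a b Ha Hb) as H1. specialize (Hclose a' b Ha' Hb) as H2.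
    apply Rabs_def2 in H1. apply Rabs_def2 in H2. apply Rabs_def1; lra. }
  assert (Hpb : Rabs (RInt p b' b) < 2 * eta).
  { pose proof (RInt_chasles p a' b' b Hp).
    specialize (Hclose a' b Ha' Hb) as H1. specialize (Hclose a' b' Ha' Hb') as H2.
    apply Rabs_def2 in H1. apply Rabs_def2 in H2. apply Rabs_def1; lra. }
  assert (C * (2 * eta) = eps / 2) by (unfold eta; field; lra).
  eapply Rle_lt_trans; [apply Rabs_triang|]. nra.
Qed.

(* Folding [-T,T] onto [0,T] with the evenness of p replaces k by the
   symmetrized kernel h(u) = k(u) + k(-u), whose primitive is
   H(u) = (ln((x+u)^2+y^2) - ln((x-u)^2+y^2))/2. *)
Definition sym_kernel (x y u : R) : R := re_kernel x y u + re_kernel x y (- u).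

Definition sym_primitive (x y u : R) : R :=
  (ln ((x + u) ^ 2 + y ^ 2) - ln ((x - u) ^ 2 + y ^ 2)) / 2.

(* The positive lower bound of H on [s,t] used below. *)
Definition primitive_floor (x y s t : R) : R := ln (1 + 4 * x * s / ((x + t) ^ 2 + y ^ 2)) / 2.

Lemma sym_primitive_deriv x y : 0 < y ->
  forall u, is_derive (sym_primitive x y) u (sym_kernel x y u).
Proof.
  intros Hy u. pose proof (sum_sq_pos (x + u) y Hy). pose proof (sum_sq_pos (x - u) y Hy).
  unfold sym_primitive, sym_kernel, re_kernel. simpl in *. auto_derive.
  - repeat split; lra.
  - replace (x - - u) with (x + u) by ring. field. lra.
Qed.

Lemma sym_kernel_cont x y : 0 < y -> cont (sym_kernel x y).
Proof.
  intros Hy. apply cont_plus; [|apply (cont_opp_arg (re_kernel x y))]; apply re_kernel_cont; auto.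
Qed.

Lemma sym_primitive_0 x y : sym_primitive x y 0 = 0.
Proof. unfold sym_primitive. rewrite Rplus_0_r, Rminus_0_r. lra. Qed.

(* For x > 0 and u >= 0, x + u is farther from 0 than x - u. *)
Lemma sym_primitive_nonneg x y u : 0 < x -> 0 < y -> 0 <= u -> 0 <= sym_primitive x y u.
Proof.
  intros Hx Hy Hu. unfold sym_primitive.
  assert (ln ((x - u) ^ 2 + y ^ 2) <= ln ((x + u) ^ 2 + y ^ 2)).
  { apply ln_le; [apply sum_sq_pos; auto|]. simpl. nra. }
  lra.
Qed.

Lemma primitive_floor_pos x y s t : 0 < x -> 0 < y -> 0 < s -> 0 < primitive_floor x y s t.
Proof.
  intros Hx Hy Hs. unfold primitive_floor.
  assert (0 < 4 * x * s / ((x + t) ^ 2 + y ^ 2)).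
  { apply Rdiv_lt_0_compat; [nra|apply sum_sq_pos; auto]. }
  assert (ln 1 < ln (1 + 4 * x * s / ((x + t) ^ 2 + y ^ 2))) by (apply ln_increasing; lra).
  rewrite ln_1 in *. lra.
Qed.

(* H(u) = ln(1 + 4xu/((x-u)^2+y^2))/2 and (x-u)^2+y^2 <= (x+t)^2+y^2 on [s,t]. *)
Lemma sym_primitive_lower x y s t u : 0 < x -> 0 < y -> 0 < s -> s <= u <= t ->
  primitive_floor x y s t <= sym_primitive x y u.
Proof.
  intros Hx Hy Hs Hu. unfold primitive_floor, sym_primitive.
  set (A := (x - u) ^ 2 + y ^ 2). set (D := (x + t) ^ 2 + y ^ 2).
  assert (HA : 0 < A) by (apply sum_sq_pos; auto).
  assert (HD : 0 < D) by (apply sum_sq_pos; auto).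
  assert (HAD : A <= D).
  { assert (D - A = (t + u) * (2 * x + t - u)) by (unfold A, D; ring).
    assert (0 <= (t + u) * (2 * x + t - u)) by (apply Rmult_le_pos; lra). lra. }
  replace ((x + u) ^ 2 + y ^ 2) with (A + 4 * x * u) by (unfold A; ring).
  rewrite <- ln_div by nra.
  assert (Hratio : 1 + 4 * x * s / D <= (A + 4 * x * u) / A).
  { replace ((A + 4 * x * u) / A) with (1 + 4 * x * u / A) by (field; lra).
    apply Rplus_le_compat_l. apply Rle_trans with (4 * x * u / D).
    - apply Rmult_le_compat_r; [left; apply Rinv_0_lt_compat; auto | nra].
    - apply Rmult_le_compat_l; [nra | apply Rinv_le_contravar; auto]. }
  assert (0 < 4 * x * s / D) by (apply Rdiv_lt_0_compat; nra).
  assert (ln (1 + 4 * x * s / D) <= ln ((A + 4 * x * u) / A)) by (apply ln_le; lra).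
  lra.
Qed.

Lemma RInt_symmetrize p x y T : 0 < y -> cont p -> (forall u, p u = p (- u)) ->
  RInt (re_cauchy_integrand p x y) (- T) T = RInt (fun u => sym_kernel x y u * p u) 0 T.
Proof.
  intros Hy Hp Hev. set (f := re_cauchy_integrand p x y).
  assert (Hf : cont f) by (apply integrand_cont; auto).
  assert (Hfo : cont (fun u => f (- u))) by (apply cont_opp_arg; auto).
  assert (Hreflect : RInt f (- T) 0 = RInt (fun u => f (- u)) 0 T).
  { pose proof (RInt_comp_lin f (-1) 0 0 T (cont_ex_RInt f _ _ Hf)) as H.
    replace (-1 * 0 + 0) with 0 in H by ring. replace (-1 * T + 0) with (- T) in H by ring.
    rewrite (RInt_swap f (- T) 0 Hf) in H.
    rewrite (RInt_ext _ (fun u => -1 * f (- u))) in H.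
    - rewrite RInt_cmul in H by auto. lra.
    - intros z _. unfold scal; simpl; unfold mult; simpl. do 2 f_equal. ring. }
  rewrite <- (RInt_chasles f (- T) 0 T Hf), Hreflect, <- RInt_add by auto.
  apply RInt_ext. intros z _. unfold f, re_cauchy_integrand, sym_kernel.
  rewrite <- (Hev z), Rmult_plus_distr_r, Rplus_comm. reflexivity.
Qed.

(* The lower bound: split [0,T] at s and t and apply Abel's inequality with
   the primitives H, H - c (>= 0 on [s,t]) and H; the boundary terms leave
   c (p(s) - p(t)) plus nonnegative terms. *)
Lemma RInt_sym_lower_bound p x y s t : 0 < x -> 0 < y -> cont p -> (forall u, 0 <= p u) ->
  (forall a b, 0 <= a -> a <= b -> p b <= p a) -> 0 < s -> s < t ->
  forall T, t <= T ->
    primitive_floor x y s t * (p s - p t) <= RInt (fun u => sym_kernel x y u * p u) 0 T.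
Proof.
  intros Hx Hy Hp Hnn Hmon Hs Hst T HT.
  assert (Hh := sym_kernel_cont x y Hy). assert (HH := sym_primitive_deriv x y Hy).
  assert (Hhp : cont (fun u => sym_kernel x y u * p u)) by (apply cont_mult; auto).
  set (c := primitive_floor x y s t).
  assert (HHc : forall u, is_derive (fun v => sym_primitive x y v - c) u (sym_kernel x y u)).
  { intros u.
    pose proof (is_derive_minus _ (fun _ => c) u _ zero (HH u) (is_derive_const c u)) as H.
    unfold minus, plus, opp, zero in H; simpl in H. rewrite Ropp_0, Rplus_0_r in H. exact H. }
  assert (A1 := abel_inequality _ _ p 0 s ltac:(lra) HH Hh Hp
     ltac:(intros u v ? ?; apply Hmon; lra)
     ltac:(intros u ?; apply sym_primitive_nonneg; lra)).
  assert (A2 := abel_inequality _ _ p s t ltac:(lra) HHc Hh Hp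
     ltac:(intros u v ? ?; apply Hmon; lra)
     ltac:(intros u ?; assert (c <= sym_primitive x y u) by (apply sym_primitive_lower; lra); lra)).
  assert (A3 := abel_inequality _ _ p t T ltac:(lra) HH Hh Hp
     ltac:(intros u v ? ?; apply Hmon; lra)
     ltac:(intros u ?; apply sym_primitive_nonneg; lra)).
  rewrite sym_primitive_0 in A1.
  assert (0 <= p T * sym_primitive x y T)
    by (apply Rmult_le_pos; auto; apply sym_primitive_nonneg; lra).
  rewrite <- (RInt_chasles _ 0 s T Hhp), <- (RInt_chasles _ s t T Hhp). nra.
Qed.

Lemma density_pos_somewhere p : cont p -> (forall u, 0 <= p u) -> (forall u, p u = p (- u)) ->
  improper_int p 1 -> exists s, 0 < s /\ 0 < p s.
Proof.
  intros Hp Hnn Hev Hprob. apply NNPP. intro Hno.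
  assert (Hpos : forall u, 0 < u -> p u = 0).
  { intros u Hu. destruct (Hnn u) as [Hlt|Heq]; auto. exfalso. eauto. }
  assert (Hzero : p 0 = 0).
  { destruct (Hnn 0) as [Hlt|Heq]; auto. exfalso.
    destruct (continuity_pt_eps p 0 (Hp 0) (p 0) Hlt) as [alp [Halp Hc]].
    specialize (Hc (alp / 2) ltac:(rewrite Rminus_0_r, Rabs_pos_eq; lra)).
    rewrite Hpos, Rminus_0_l, Rabs_Ropp, Rabs_pos_eq in Hc; lra. }
  assert (Hall : forall u, p u = 0).
  { intros u. destruct (Rtotal_order u 0) as [H|[H|H]].
    - rewrite Hev. apply Hpos. lra.
    - subst. auto.
    - auto. }
  destruct (improper_int_RInt p 1 Hp Hprob (1 / 2) ltac:(lra)) as [M [HM Hclose]].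
  specialize (Hclose (- M - 1) (M + 1) ltac:(lra) ltac:(lra)).
  rewrite (RInt_ext p (fun _ => 0)), RInt_const in Hclose by (intros; apply Hall).
  unfold scal in Hclose; simpl in Hclose; unfold mult in Hclose; simpl in Hclose.
  rewrite Rmult_0_r, Rminus_0_l, Rabs_Ropp, Rabs_R1 in Hclose. lra.
Qed.

(* Since p(x) ln x -> 0 and ln x >= 1 for x >= e, p eventually drops below
   any positive level. *)
Lemma density_small_far p s c : (forall u, 0 <= p u) ->
  (forall eps, 0 < eps -> exists M, forall x, M < x -> Rabs (p x * ln x) < eps) ->
  0 < c -> exists t, s < t /\ p t < c.
Proof.
  intros Hnn Hlog Hc. destruct (Hlog c Hc) as [M HM].
  pose proof (Rmax_l M (Rmax s 0)). pose proof (Rmax_r M (Rmax s 0)).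
  pose proof (Rmax_l s 0). pose proof (Rmax_r s 0).
  set (t := Rmax M (Rmax s 0) + 3).
  exists t. split; [unfold t; lra|].
  specialize (HM t ltac:(unfold t; lra)).
  assert (Hl : 1 <= ln t).
  { rewrite <- (ln_exp 1). apply ln_le; [apply exp_pos|]. pose proof exp_le_3. unfold t. lra. }
  pose proof (Rle_abs (p t * ln t)). pose proof (Hnn t).
  assert (p t <= p t * ln t) by nra. lra.
Qed.

Theorem lemma3 (p : R -> R)
  (p_nonneg : forall x, 0 <= p x)
  (p_prob : improper_int p 1)
  (p_lac : loc_abs_cont p)
  (p_even : forall x, p x = p (- x))
  (p_decr : exists N : R -> Prop, null_set N /\
      forall x, 0 < x -> ~ N x -> exists l, derivable_pt_lim p x l /\ l <= 0)
  (p_log : forall eps, 0 < eps -> exists M, forall x, M < x ->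
      Rabs (p x * ln x) < eps) :
  forall x y, 0 < x -> 0 < y ->
    exists l, re_cauchy_transform_is p x y l /\ 0 < l.
Proof.
  intros x y Hx Hy. destruct p_decr as [N [HN Hderiv]].
  assert (Hp := loc_abs_cont_cont p p_lac).
  assert (Hmon := nonincreasing_nonneg p N p_lac HN Hderiv).
  assert (Hf := integrand_cont p x y Hy Hp).
  destruct (improper_int_of_cauchy _ Hf (integrand_cauchy p x y Hy Hp p_nonneg p_prob))
    as [l Hl].
  exists l. split; [exact Hl|].
  destruct (density_pos_somewhere p Hp p_nonneg p_even p_prob) as [s [Hs Hps]].
  destruct (density_small_far p s (p s) p_nonneg p_log Hps) as [t [Hst Hpt]].
  assert (0 < primitive_floor x y s t * (p s - p t))
    by (apply Rmult_lt_0_compat; [apply primitive_floor_pos|]; lra).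
  enough (primitive_floor x y s t * (p s - p t) <= l) by lra.
  apply (improper_int_lower_bound _ l _ t Hf Hl). intros T HT.
  rewrite RInt_symmetrize by auto. apply RInt_sym_lower_bound; auto.
Qed.
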